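(* Suppose $(\varepsilon,\beta,\gamma;(12))\in\mathrm{Par}(n)$. If $\beta$ has a cycle of odd length $d$, then $\gamma$ has at least one cycle whose length divides $d$. Here fixed points are regarded as cycles of length $1$.
   Context: A Latin square of order $n$ is an $n\times n$ array with rows, columns and symbols indexed by $[n]$, each symbol occurring once in each row and each column, with triple set $O(L)$. Permutations act on the right; $\varepsilon$ is the identity. A paratopism $(\alpha,\beta,\gamma;(12))$ maps $L$ to $L^\sigma$ with triple set $\{(y\beta,x\alpha,z\gamma):(x,y,z)\in O(L)\}$; it is an autoparatopism of $L$ if $L^\sigma=L$. $\mathrm{Par}(n)$ is the set of paratopisms that are autoparatopisms of at least one Latin square of order $n$. *)

From mathcomp Require Import all_boot all_fingroup.
Set Implicit Arguments. Unset Strict Implicit. Unset Printing Implicit Defensive.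

(* A Latin square of order n: L x y is the symbol in row x, column y;
   each symbol occurs once in each row and each column (i.e. rows and
   columns are injective, hence bijective, maps 'I_n -> 'I_n). *)
Definition latin_square (n : nat) (L : 'I_n -> 'I_n -> 'I_n) : Prop :=
  (forall x, injective (L x)) /\ (forall y, injective (fun x => L x y)).

Definition triples (n : nat) (L : 'I_n -> 'I_n -> 'I_n) : {set 'I_n * 'I_n * 'I_n} :=
  [set t | t.2 == L t.1.1 t.1.2].

(* Triple set of L^sigma for sigma = (alpha,beta,gamma;(12)), permutations
   acting on the right: x alpha = alpha x. *)
Definition paratope12 (n : nat) (alpha beta gamma : {perm 'I_n})
    (L : 'I_n -> 'I_n -> 'I_n) : {set 'I_n * 'I_n * 'I_n} :=
  (fun t : 'I_n * 'I_n * 'I_n => (beta t.1.2, alpha t.1.1, gamma t.2)) @: triples L.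

Definition autoparatopism12 (n : nat) (alpha beta gamma : {perm 'I_n})
    (L : 'I_n -> 'I_n -> 'I_n) : Prop :=
  paratope12 alpha beta gamma L = triples L.

Definition in_Par12 (n : nat) (alpha beta gamma : {perm 'I_n}) : Prop :=
  exists L : 'I_n -> 'I_n -> 'I_n, latin_square L /\ autoparatopism12 alpha beta gamma L.

From mathcomp Require Import all_boot all_fingroup.

Set Implicit Arguments.
Unset Strict Implicit.
Unset Printing Implicit Defensive.

(* With alpha the identity, the autoparatopism says L(b beta, a) = L(a, b) gamma,
   so applying it twice shifts both coordinates by beta at the cost of gamma^2.
   If beta has a cycle of odd length d = 2k + 1 through x, the symbol
   z = L(x beta^(k+1), x) satisfies z gamma^(2k) = L(x, x beta^k) and hence
   z gamma^d = z: the gamma-cycle of z has length dividing d. *)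

Lemma porbit_dvd (T : finType) (s : {perm T}) x d :
  iter d s x = x -> #|porbit s x| %| d.
Proof.
set c := #|porbit s x|; move=> fix_d.
have c_gt0 : 0 < c by rewrite lt0n card_porbit_neq0.
have fix_dc : iter (d %% c) s x = x.
  by move: fix_d; rewrite {1}(divn_eq d c) addnC iterD iterM (iter_fix _ (iter_porbit s x)).
have : nth x (traject s x c) (d %% c) == nth x (traject s x c) 0.
  by rewrite !nth_traject ?ltn_mod // fix_dc.
by rewrite nth_uniq ?size_traject ?ltn_mod ?uniq_traject_porbit.
Qed.

Lemma autoparatopism12E (n : nat) (alpha beta gamma : {perm 'I_n}) L :
  autoparatopism12 alpha beta gamma L ->
  forall a b, L (beta b) (alpha a) = gamma (L a b).
Proof.
move=> auto a b.
have : (beta b, alpha a, gamma (L a b)) \in paratope12 alpha beta gamma L.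
  by apply/imsetP; exists (a, b, L a b); rewrite ?inE.
by rewrite auto inE => /eqP.
Qed.

Section TwistedEquivariance.

Variables (T U : Type) (f : T -> T) (g : U -> U) (L : T -> T -> U).
Hypothesis twist : forall a b, L (f b) a = g (L a b).

Lemma twisted_iter k a b : L (iter k f a) (iter k f b) = iter k.*2 g (L a b).
Proof. by elim: k a b => [|k IHk] a b //=; rewrite twist twist IHk. Qed.

Lemma twisted_odd_cycle x d : odd d -> iter d f x = x ->
  let z := L (iter (d./2).+1 f x) x in iter d g z = z.
Proof.
move=> odd_d fix_d z; have d_eq : d = (d./2).*2.+1 by rewrite -[LHS]odd_double_half odd_d.
have back_to_x : iter d./2 f (iter (d./2).+1 f x) = x.
  by rewrite -iterD addnS addnn -d_eq.
by rewrite d_eq iterS -(twisted_iter d./2) back_to_x -twist.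
Qed.

End TwistedEquivariance.

Theorem theorem4p3 (n : nat) (beta gamma : {perm 'I_n}) :
  in_Par12 1 beta gamma ->
  forall x : 'I_n, odd #|porbit beta x| ->
  exists z : 'I_n, #|porbit gamma z| %| #|porbit beta x|.
Proof.
move=> [L [_ auto]] x odd_cycle.
have twist a b : L (beta b) a = gamma (L a b).
  by rewrite -(autoparatopism12E auto) perm1.
eexists; apply: porbit_dvd.
exact: (twisted_odd_cycle twist odd_cycle (iter_porbit beta x)).
Qed.
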